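(* Let $G$ be a bridgeless cubic graph and let $G_\triangle$ be the graph obtained from $G$ by replacing every vertex by a triangle. Then $G$ is $3$-edge-colorable if and only if $L(G_\triangle)=\frac{3}{2}\,l(G_\triangle)$.
   Context: Graphs are finite, undirected, without loops or multiple edges. $\nu(G)$ denotes the maximum size of a matching of $G$; a matching is maximum if it has $\nu(G)$ edges. For $F\subseteq E(G)$, $G\setminus F$ is the graph with vertex set $V(G)$ and edge set $E(G)\setminus F$. Define $L(G)=\max\{\nu(G\setminus F): F \text{ a maximum matching of } G\}$ and $l(G)=\min\{\nu(G\setminus F): F \text{ a maximum matching of } G\}$. Replacing a vertex $v$ of a cubic graph by a triangle means: delete $v$, add three new vertices $v_1,v_2,v_3$ forming a triangle, and for the three edges $vu_1,vu_2,vu_3$ formerly incident to $v$, join $v_i$ to the endpoint corresponding to $u_i$; doing this for all vertices simultaneously gives $G_\triangle$, whose edges are the triangle edges together with edges corresponding bijectively to $E(G)$. *)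

From mathcomp Require Import all_boot.
Set Implicit Arguments. Unset Strict Implicit. Unset Printing Implicit Defensive.

Section Graphs.
Variable T : finType.

Definition edges (r : rel T) : {set {set T}} :=
  [set [set p.1; p.2] | p in [pred p : T * T | r p.1 p.2]].

Definition matching (E M : {set {set T}}) : bool :=
  (M \subset E) &&
  [forall m1 in M, forall m2 in M, (m1 != m2) ==> [disjoint m1 & m2]].

Definition nu (E : {set {set T}}) : nat :=
  \max_(M : {set {set T}} | matching E M) #|M|.

Definition max_matching (E M : {set {set T}}) : bool :=
  matching E M && (#|M| == nu E).

Definition Lmax (E : {set {set T}}) : nat :=
  \max_(F : {set {set T}} | max_matching E F) nu (E :\: F).

(* l(G) = min { nu(G \ F) : F maximum matching of G }.  The neutral element
   #|E| is harmless: maximum matchings exist and every nu(E\F) <= #|E|. *)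
Definition lmin (E : {set {set T}}) : nat :=
  \big[minn/#|E|]_(F : {set {set T}} | max_matching E F) nu (E :\: F).

Definition simple_graph (r : rel T) : Prop := symmetric r /\ irreflexive r.

Definition cubic (r : rel T) : Prop := forall v : T, #|[set u | r v u]| = 3.

Definition bridgeless (r : rel T) : Prop :=
  forall x y : T, r x y ->
    connect (fun a b => r a b && ([set a; b] != [set x; y])) x y.

Definition three_edge_colorable (r : rel T) : Prop :=
  exists c : {set T} -> 'I_3,
    forall x y z : T, r x y -> r x z -> y != z -> c [set x; y] != c [set x; z].

End Graphs.

(* G_triangle: the vertex v is replaced by the three vertices (v,u), u a
   neighbour of v (i.e. the darts of G); (v,u)-(v,w) (u <> w) are the triangle
   edges, (v,u)-(u,v) is the edge corresponding to the edge vu of G. *)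
Definition dart (T : finType) (r : rel T) : finType := {p : T * T | r p.1 p.2}.

Definition tri_rel (T : finType) (r : rel T) : rel (dart r) :=
  fun d1 d2 =>
    ((val d1).1 == (val d2).1) && ((val d1).2 != (val d2).2)
    || ((val d1).1 == (val d2).2) && ((val d1).2 == (val d2).1).
Arguments tri_rel {T} r.

From mathcomp Require Import all_boot.
Set Implicit Arguments. Unset Strict Implicit. Unset Printing Implicit Defensive.

(* First, general facts on matchings of a graph whose edges are 2-sets: when a
   perfect matching exists, the maximum matchings are the perfect ones, L is at
   most |D|/2 with equality iff there are two disjoint perfect matchings F, M,
   and at maximum degree three such F, M give a proper 3-edge-colouring.
   Then, for G_triangle: the outer edges (one per edge of G) form a perfect
   matching, and l(G_triangle) = |V(G)|, since every matching leaves one edge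
   of each triangle while the triangles alone carry at most |V(G)| disjoint
   edges.  As |D| = 3 |V(G)|, the identity 2L = 3l says L = |D|/2, i.e. that
   G_triangle has two disjoint perfect matchings.  These give a proper
   colouring of G_triangle, in which the outer edges at each triangle get
   three distinct colours: this colours G.  Conversely, a colouring of G gives
   for each colour j the perfect matching of outer edges of colour j and of the
   triangle edges joining the two darts of colour other than j. *)

Lemma ord3_cover (x y z j : 'I_3) :
  x != y -> y != z -> x != z -> [|| j == x, j == y | j == z].
Proof.
by case: x => [[|[|[|x]]] ?] //; case: y => [[|[|[|y]]] ?] //;
   case: z => [[|[|[|z]]] ?] //; case: j => [[|[|[|j]]] ?].
Qed.

Lemma set2_inj (U : finType) (a b c : U) : a != b -> [set a; b] = [set a; c] -> b = c.
Proof.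
move=> ab /setP /(_ b); rewrite !inE eqxx orbT eq_sym (negbTE ab) /=.
by move/esym/eqP.
Qed.

Lemma bigminn_le (I : finType) (P : pred I) (f : I -> nat) x i0 :
  P i0 -> \big[minn/x]_(i | P i) f i <= f i0.
Proof.
move=> Pi0; rewrite -big_filter.
have: i0 \in [seq i <- index_enum I | P i] by rewrite mem_filter Pi0 mem_index_enum.
elim: [seq i <- _ | _] => //= h t IH; rewrite inE big_cons => /orP [/eqP <-|/IH].
  exact: geq_minl.
exact: leq_trans (geq_minr _ _).
Qed.

Section EdgesOfRelation.
Variable U : finType.

Lemma edges_at (g : rel U) e a : symmetric g ->
  e \in edges g -> a \in e -> exists2 b, g a b & e = [set a; b].
Proof.
move=> gsym /imsetP [[x y] /= gxy ->] /set2P [] ->; first by exists y.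
by exists x; rewrite 1?gsym // setUC.
Qed.

Lemma edges_disjoint (g h : rel U) : symmetric h ->
  (forall a b, g a b -> a != b) -> (forall a b, g a b -> h a b -> False) ->
  [disjoint edges g & edges h].
Proof.
move=> hsym gneq gh; apply/pred0P => e /=; apply/negbTE/andP.
case=> /imsetP [[a b] /= gab ->] /(edges_at hsym)/(_ (set21 a b)) [b' hab' e'].
by apply: (gh a b gab); rewrite (set2_inj (gneq a b gab) e').
Qed.

End EdgesOfRelation.

Definition perfect_matching (U : finType) (E M : {set {set U}}) : bool :=
  matching E M && (#|M| * 2 == #|U|).

Definition proper_colouring (U : finType) (E : {set {set U}}) (col : {set U} -> 'I_3) :=
  forall a e1 e2, e1 \in E -> e2 \in E -> a \in e1 -> a \in e2 -> e1 != e2 ->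
    col e1 != col e2.

Section Matchings.
Variable U : finType.
Implicit Types (E M F : {set {set U}}).

Lemma matching_subset E M : matching E M -> M \subset E.
Proof. by case/andP. Qed.

Lemma matching_sub E1 E2 M : E1 \subset E2 -> matching E1 M -> matching E2 M.
Proof. by move=> sE /andP [sM dM]; rewrite /matching (subset_trans sM sE). Qed.

Lemma matching_setD E F M : matching E M -> [disjoint M & F] -> matching (E :\: F) M.
Proof.
case/andP=> sM dM dMF; rewrite /matching dM andbT.
apply/subsetP => e eM; rewrite inE (subsetP sM _ eM) andbT.
by apply: contraTN dMF => eF; apply/pred0Pn; exists e; rewrite /= eM.
Qed.

Lemma matching_eq E M e1 e2 a : matching E M -> e1 \in M -> e2 \in M ->
  a \in e1 -> a \in e2 -> e1 = e2.
Proof.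
case/andP=> _ /forall_inP dM m1 m2 a1 a2; apply/eqP; apply: contraTT isT => ne.
move: (dM _ m1) => /forall_inP /(_ _ m2); rewrite ne /= => /disjointFr /(_ a1).
by rewrite a2.
Qed.

Lemma nu_le_card E : nu E <= #|E|.
Proof. by apply/bigmax_leqP => M /matching_subset /subset_leq_card. Qed.

Section PairEdges.
Variable E : {set {set U}}.
Hypothesis E_pairs : {in E, forall e : {set U}, #|e| = 2}.

Lemma matching_cover_card M : matching E M -> #|cover M| = #|M| * 2.
Proof.
move=> mM; have sM := matching_subset mM.
apply: card_uniform_partition; first by move=> e /(subsetP sM) /E_pairs.
apply/and3P; split => //.
  apply/trivIsetP => e1 e2 h1 h2 ne; apply/pred0P => a /=.
  apply/negbTE/negP => /andP [a1 a2]; move/eqP: ne; apply.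
  exact: matching_eq mM h1 h2 a1 a2.
by apply/negP => /(subsetP sM) /E_pairs; rewrite cards0.
Qed.

Lemma matching_size M : matching E M -> #|M| * 2 <= #|U|.
Proof. by move/matching_cover_card <-; apply: max_card. Qed.

Lemma nu_size E' : E' \subset E -> nu E' * 2 <= #|U|.
Proof.
move=> sE; rewrite -leq_divRL //; apply/bigmax_leqP => M mM; rewrite leq_divRL //.
exact/matching_size/(matching_sub sE mM).
Qed.

Lemma perfect_cover M a : perfect_matching E M -> exists2 e, e \in M & a \in e.
Proof.
case/andP=> mM /eqP cM.
have: cover M == [set: U] by rewrite eqEcard subsetT cardsT matching_cover_card // cM leqnn.
by move/eqP/setP/(_ a); rewrite inE => /bigcupP [e eM ae]; exists e.
Qed.

Lemma perfect_edges (g : rel U) : symmetric g ->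
  (forall a b, g a b -> [set a; b] \in E) -> (forall a, exists b, g a b) ->
  (forall a b b', g a b -> g a b' -> b = b') -> perfect_matching E (edges g).
Proof.
move=> gsym gE gex guniq.
have mg : matching E (edges g).
  apply/andP; split; first by apply/subsetP => _ /imsetP [[a b] /= gab ->]; apply: gE.
  apply/forall_inP => e1 h1; apply/forall_inP => e2 h2; apply/implyP => ne.
  apply/pred0P => a /=; apply/negbTE/andP => [[a1 a2]].
  have [b1 g1 e1E] := edges_at gsym h1 a1; have [b2 g2 e2E] := edges_at gsym h2 a2.
  by move: ne; rewrite e1E e2E (guniq _ _ _ g1 g2) eqxx.
rewrite /perfect_matching mg -matching_cover_card // -cardsT /=.
apply/eqP/eq_card => a; rewrite inE; have [b gab] := gex a.
by apply/bigcupP; exists [set a; b]; rewrite ?set21 //; apply/imsetP; exists (a, b).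
Qed.

Section PerfectExists.
Variable M0 : {set {set U}}.
Hypothesis M0_perfect : perfect_matching E M0.

Lemma nu_perfect : nu E * 2 = #|U|.
Proof.
case/andP: M0_perfect => mM0 /eqP cM0.
apply/eqP; rewrite eqn_leq nu_size //= -cM0 leq_mul2r /=.
exact: leq_bigmax_cond mM0.
Qed.

Lemma max_matching_perfect F : max_matching E F = perfect_matching E F.
Proof. by rewrite /max_matching /perfect_matching -nu_perfect eqn_mul2r. Qed.

Lemma Lmax_perfect : Lmax E * 2 = #|U| <->
  exists F M, perfect_matching E F /\ perfect_matching (E :\: F) M.
Proof.
split=> [|[F [M [pF /andP [mM /eqP cM]]]]]; last first.
  apply/eqP; rewrite eqn_leq; apply/andP; split.
    rewrite -leq_divRL //; apply/bigmax_leqP => F' _; rewrite leq_divRL //.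
    exact/nu_size/subsetDl.
  rewrite -cM leq_mul2r /=; rewrite -max_matching_perfect in pF.
  by apply: leq_trans (leq_bigmax_cond _ pF); apply: leq_bigmax_cond mM.
have: 0 < #|[pred F | max_matching E F]|.
  by apply/card_gt0P; exists M0; rewrite inE max_matching_perfect.
case/(eq_bigmax_cond (fun F => nu (E :\: F))) => F pF; rewrite /Lmax => -> h.
have: 0 < #|[pred M | matching (E :\: F) M]|.
  apply/card_gt0P; exists set0; rewrite inE /matching sub0set.
  by apply/forall_inP => e; rewrite inE.
case/(eq_bigmax_cond (fun M : {set {set U}} => #|M|)) => M mM hM.
exists F, M; rewrite -max_matching_perfect; split => //.
by rewrite /perfect_matching -h /nu hM eqxx andbT; exact: mM.
Qed.

Lemma lmin_perfect n :
  (forall F, perfect_matching E F -> n <= nu (E :\: F)) ->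
  (exists2 F, perfect_matching E F & nu (E :\: F) <= n) -> lmin E = n.
Proof.
move=> lo [F0 pF0 hi]; rewrite /lmin; apply/eqP; rewrite eqn_leq; apply/andP; split.
  by apply: leq_trans hi; apply: bigminn_le; rewrite max_matching_perfect.
elim/big_ind: _ => [||F]; last by rewrite max_matching_perfect => /lo.
- apply: leq_trans (lo _ pF0) _; apply: leq_trans (nu_le_card _) _.
  exact/subset_leq_card/subsetDl.
- by move=> x y hx hy; rewrite leq_min hx hy.
Qed.

End PerfectExists.

Section DegreeThree.
Hypothesis E_deg3 : forall a, #|[set e in E | a \in e]| <= 3.

Definition colour_of F M (e : {set U}) : 'I_3 :=
  if e \in F then @Ordinal 3 0 isT else if e \in M then @Ordinal 3 1 isT
  else @Ordinal 3 2 isT.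

Lemma no_four_edges a e1 e2 e3 e4 : e1 \in E -> e2 \in E -> e3 \in E -> e4 \in E ->
  a \in e1 -> a \in e2 -> a \in e3 -> a \in e4 -> uniq [:: e1; e2; e3; e4] -> False.
Proof.
move=> E1 E2 E3 E4 a1 a2 a3 a4 u.
have: #|[set:: [:: e1; e2; e3; e4]]| <= 3.
  apply: leq_trans (E_deg3 a); apply: subset_leq_card; apply/subsetP => e.
  by rewrite !inE => /or4P [] /eqP ->; rewrite ?E1 ?E2 ?E3 ?E4 ?a1 ?a2 ?a3 ?a4.
by rewrite cardsE (card_uniqP u).
Qed.

(* In a graph of maximum degree three, two disjoint perfect matchings yield a
   proper 3-edge-colouring: besides its F-edge and its M-edge, a vertex lies
   on at most one further edge, which gets the third colour. *)
Lemma colour_of_proper F M : perfect_matching E F -> perfect_matching (E :\: F) M ->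
  proper_colouring E (colour_of F M).
Proof.
move=> pF pM a e1 e2 E1 E2 a1 a2 ne.
have mF := proj1 (andP pF); have mM := proj1 (andP pM).
have [fa fF afa] := perfect_cover a pF.
have pME : perfect_matching E M by rewrite /perfect_matching (proj2 (andP pM))
  (matching_sub (subsetDl _ _) mM).
have [ma mMa ama] := perfect_cover a pME.
have /setDP [maE maF] := subsetP (matching_subset mM) _ mMa.
have faE := subsetP (matching_subset mF) _ fF.
rewrite /colour_of; case h1: (e1 \in F); case h2: (e2 \in F).
- by move: ne; rewrite (matching_eq mF h1 h2 a1 a2) eqxx.
- by case: (e2 \in M).
- by case: (e1 \in M).
case m1: (e1 \in M); case m2: (e2 \in M) => //.
  by move: ne; rewrite (matching_eq mM m1 m2 a1 a2) eqxx.
exfalso; apply: (no_four_edges E1 E2 faE maE a1 a2 afa ama).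
rewrite /= !inE !negb_or ne andbT /=; apply/and3P; split.
- by apply/andP; split; [apply: contraFneq h1 => ->|apply: contraFneq m1 => ->].
- by apply/andP; split; [apply: contraFneq h2 => ->|apply: contraFneq m2 => ->].
- by apply: contraNneq maF => <-.
Qed.

End DegreeThree.
End PairEdges.
End Matchings.

Section TriangleReplacement.
Variables (T : finType) (r : rel T).
Hypotheses (r_sym : symmetric r) (r_irr : irreflexive r) (r_cubic : cubic r).

Local Notation D := (dart r).
Local Notation tr := (tri_rel r).
Local Notation E := (edges (tri_rel r)).

Definition triangle (v : T) : {set D} := [set d : D | (val d).1 == v].

Lemma dart_neq (d : D) : (val d).1 != (val d).2.
Proof. by apply/eqP=> h; have := valP d; rewrite h r_irr. Qed.

Lemma dart_eqE (a b : D) : (a == b) = ((val a).1 == (val b).1) && ((val a).2 == (val b).2).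
Proof.
case: a b => [[a1 a2] ha] [[b1 b2] hb] /=.
apply/eqP/andP => [[-> ->]|[/eqP e1 /eqP e2]] //.
by apply: val_inj => /=; rewrite e1 e2.
Qed.

Lemma rev_dart_proof (d : D) : r (val d).2 (val d).1.
Proof. by rewrite r_sym (valP d). Qed.

Definition rev_dart (d : D) : D := Sub ((val d).2, (val d).1) (rev_dart_proof d).

Lemma val_rev_dart (d : D) : val (rev_dart d) = ((val d).2, (val d).1).
Proof. by []. Qed.

Lemma rev_dartK : involutive rev_dart.
Proof. by move=> d; apply: val_inj; rewrite !val_rev_dart; case: (val d). Qed.

Lemma rev_dart_other (a b : D) : (val a).1 = (val b).1 -> rev_dart a != b.
Proof.
move=> e; apply: contraTneq (dart_neq a) => h.
by rewrite -[(val a).2]/((val (rev_dart a)).1) h e eqxx.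
Qed.

Lemma rev_dart_tail (a : D) : ((val a).1 == (val (rev_dart a)).1) = false.
Proof. by rewrite val_rev_dart; apply/negbTE/dart_neq. Qed.

Lemma tri_relE (a b : D) : tr a b = (b == rev_dart a) || ((val a).1 == (val b).1) && (a != b).
Proof.
rewrite /tri_rel !dart_eqE val_rev_dart /=.
move: (dart_neq a) (dart_neq b); case: a => [[a1 a2] ha]; case: b => [[b1 b2] hb] /= na nb.
case: (a1 =P b1) => [<-|n1] /=; case: (a2 =P b2) => [<-|n2] /=;
  rewrite ?eqxx ?andbT ?andbF ?orbF //=; try by rewrite ?(negbTE na) ?(negbTE nb).
- by rewrite (negbTE na) [a2 == a1]eq_sym (negbTE na) andbF.
- by rewrite andbC [a1 == _]eq_sym [a2 == _]eq_sym.
Qed.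

Lemma tri_rel_sym : symmetric tr.
Proof.
move=> a b; rewrite /tri_rel; congr orb; first by rewrite eq_sym [_.2 == _]eq_sym.
by rewrite andbC eq_sym [_.2 == _]eq_sym.
Qed.

Lemma tri_rel_neq (a b : D) : tr a b -> a != b.
Proof. by rewrite tri_relE => /orP [/eqP ->|/andP [_ //]]; rewrite eq_sym rev_dart_other. Qed.

Lemma tri_edge (a b : D) : tr a b -> [set a; b] \in E.
Proof. by move=> h; apply/imsetP; exists (a, b). Qed.

Lemma tri_pairs : {in E, forall e : {set D}, #|e| = 2}.
Proof. by move=> _ /imsetP [[a b] /= h ->]; rewrite cards2 tri_rel_neq. Qed.

Lemma same_triangle_tri (a b : D) : (val a).1 = (val b).1 -> a != b -> tr a b.
Proof. by move=> e ne; rewrite tri_relE e eqxx ne orbT. Qed.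

Lemma triangle_card v : #|triangle v| = 3.
Proof.
rewrite -(r_cubic v) -(@card_in_imset _ _ (fun d : D => (val d).2)); last first.
  move=> a b; rewrite !inE => /eqP ha /eqP hb e; apply/eqP.
  by rewrite dart_eqE ha hb e !eqxx.
suff -> : [set (val d).2 | d in triangle v] = [set u | r v u] by [].
apply/setP => u; rewrite inE; apply/imsetP/idP.
  by case=> d; rewrite inE => /eqP <- ->; apply: (valP d).
by move=> h; exists (Sub (v, u) h : D); rewrite // inE.
Qed.

Lemma card_darts : #|D| = 3 * #|T|.
Proof.
rewrite -sum1_card (partition_big (fun d : D => (val d).1) xpredT) //=.
rewrite mulnC -sum_nat_const; apply: eq_bigr => v _.
by rewrite -(triangle_card v) -sum1_card; apply: eq_bigl => d; rewrite inE.
Qed.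

Lemma triangle_third v (d1 d2 : D) : exists2 d3, d3 \in triangle v & (d3 != d1) && (d3 != d2).
Proof.
have: ~~ (triangle v \subset [set d1; d2]).
  by apply/negP => /subset_leq_card; rewrite triangle_card cards2; case: (d1 != d2).
by case/subsetPn => d3 h3; rewrite !inE negb_or => hn; exists d3.
Qed.

Lemma tri_degree (a : D) : #|[set e in E | a \in e]| <= 3.
Proof.
apply: (@leq_trans #|[set [set a; b] | b in [set b | tr a b]]|).
  apply: subset_leq_card; apply/subsetP => e; rewrite inE => /andP [eE ae].
  by case: (edges_at tri_rel_sym eE ae) => b h ->; apply: imset_f; rewrite inE.
apply: leq_trans (leq_imset_card _ _) _.
apply: (@leq_trans #|rev_dart a |: (triangle (val a).1 :\ a)|).
  apply: subset_leq_card; apply/subsetP => b; rewrite inE tri_relE.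
  case/orP => [/eqP ->|/andP [e ne]]; first by rewrite setU11.
  by rewrite !inE [b == a]eq_sym ne /= [(val b).1 == _]eq_sym e orbT.
have := cardsD1 a (triangle (val a).1); rewrite triangle_card inE eqxx add1n => -[h].
by rewrite cardsU1 -h; case: (_ \notin _).
Qed.

Definition outer : {set {set D}} := edges (fun a b : D => b == rev_dart a).

Lemma outer_perfect : perfect_matching E outer.
Proof.
apply: (@perfect_edges _ _ tri_pairs (fun a b : D => b == rev_dart a)).
- by move=> a b; apply/eqP/eqP => ->; rewrite rev_dartK.
- by move=> a b /eqP ->; apply: tri_edge; rewrite tri_relE eqxx.
- by move=> a; exists (rev_dart a).
- by move=> a b b' /eqP -> /eqP ->.
Qed.

Lemma inner_edge e : e \in E :\: outer ->
  exists v, e \subset triangle v /\ [set (val a).1 | a in e] = [set v].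
Proof.
case/setDP => /imsetP [[a b] /= h ->] nO.
move: h; rewrite inE /= tri_relE => /orP [/eqP eb|/andP [/eqP e1 _]].
  by case/negP: nO; apply/imsetP; exists (a, b); rewrite //= inE eb.
exists (val a).1; split.
  by apply/subsetP => x; rewrite !inE => /orP [] /eqP ->; rewrite ?e1 eqxx.
by rewrite imsetU !imset_set1 -e1 setUid.
Qed.

(* Without the outer edges only the |V(G)| disjoint triangles remain. *)
Lemma nu_inner : nu (E :\: outer) <= #|T|.
Proof.
apply/bigmax_leqP => M mM; have sM := matching_subset mM.
have mME : matching E M := matching_sub (subsetDl _ _) mM.
(* Send an inner edge to (the singleton of) the vertex of its triangle:
   two disjoint 2-sets do not fit in one triangle, so this is injective. *)
pose key (e : {set D}) := [set (val a).1 | a in e].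
rewrite -(@card_in_imset _ _ key); last first.
  move=> e1 e2 h1 h2; rewrite /key; have [v1 [s1 ->]] := inner_edge (subsetP sM _ h1).
  have [v2 [s2 ->]] := inner_edge (subsetP sM _ h2) => /set1_inj ev; subst v2.
  apply/eqP; apply: contraT => ne.
  have: #|e1 :|: e2| <= #|triangle v1| by apply/subset_leq_card; rewrite subUset s1 s2.
  have [E1 E2] := (subsetP (matching_subset mME) _ h1, subsetP (matching_subset mME) _ h2).
  rewrite cardsU triangle_card (tri_pairs E1) (tri_pairs E2).
  suff -> : e1 :&: e2 = set0 by rewrite cards0.
  apply/setP => a; rewrite !inE; apply/negbTE/andP => -[a1 a2].
  by move/eqP: ne; apply; apply: matching_eq mM h1 h2 a1 a2.
apply: (@leq_trans #|[set [set v] | v : T]|); last exact: leq_imset_card.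
apply/subset_leq_card/subsetP => _ /imsetP [e eM ->].
by have [v [_ kv]] := inner_edge (subsetP sM _ eM); rewrite /key kv; apply: imset_f.
Qed.

Lemma triangle_free_edge v F : matching E F ->
  exists e, (e \in E :\: F) && (e \subset triangle v).
Proof.
move=> mF; have: 2 < #|triangle v| by rewrite triangle_card.
case/card_gt2P => x [y [z [[xv yv zv] [xy yz zx]]]].
have sub a b : a \in triangle v -> b \in triangle v -> [set a; b] \subset triangle v.
  by move=> ha hb; apply/subsetP => c /set2P [] ->.
move: (xv) (yv) (zv); rewrite !inE => /eqP ex /eqP ey /eqP ez.
have exy : [set x; y] \in E by apply/tri_edge/same_triangle_tri; rewrite ?ex ?ey.
have eyz : [set y; z] \in E by apply/tri_edge/same_triangle_tri; rewrite ?ey ?ez.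
case hxy: ([set x; y] \in F); last by exists [set x; y]; rewrite inE hxy exy sub.
case hyz: ([set y; z] \in F); last by exists [set y; z]; rewrite inE hyz eyz sub.
have /setP /(_ x) := matching_eq mF hxy hyz (set22 _ _) (set21 _ _).
rewrite !inE eqxx /= => /esym /orP [] /eqP exz.
  by move: xy; rewrite exz eqxx.
by move: zx; rewrite exz eqxx.
Qed.

(* Whatever matching F is removed, one edge per triangle survives. *)
Lemma nu_complement_ge F : matching E F -> #|T| <= nu (E :\: F).
Proof.
move=> mF.
pose g v := odflt set0 [pick e | (e \in E :\: F) && (e \subset triangle v)].
have gP v : (g v \in E :\: F) && (g v \subset triangle v).
  rewrite /g; case: pickP => [e //|/= none].
  by case: (triangle_free_edge v mF) => e; rewrite (none e).
have gv v a : a \in g v -> (val a).1 = v.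
  by case/andP: (gP v) => _ /subsetP h /h; rewrite inE => /eqP.
have ginj : injective g.
  move=> v w gvw; have /andP [/setDP [/tri_pairs g2 _] _] := gP v.
  have /card_gt0P [a ha] : 0 < #|g v| by rewrite g2.
  by rewrite -(gv _ _ ha) (gv w a) // -gvw.
have mM : matching (E :\: F) [set g v | v : T].
  apply/andP; split; first by apply/subsetP => _ /imsetP [v _ ->]; case/andP: (gP v).
  apply/forall_inP => _ /imsetP [v _ ->]; apply/forall_inP => _ /imsetP [w _ ->].
  apply/implyP => ne; apply/pred0P => a /=; apply/negbTE/andP => -[a1 a2].
  by move: ne; rewrite -(gv _ _ a1) (gv _ _ a2) eqxx.
by apply: leq_trans (leq_bigmax_cond _ mM); rewrite card_imset // cardsT.
Qed.

Lemma lmin_tri : lmin E = #|T|.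
Proof.
apply: (lmin_perfect tri_pairs outer_perfect).
  by move=> F /andP [mF _]; apply: nu_complement_ge.
by exists outer; [apply: outer_perfect | apply: nu_inner].
Qed.

Definition endpoints (d : D) : {set T} := [set (val d).1; (val d).2].

Lemma endpoints_eq (d d' : D) : endpoints d' = endpoints d -> d' = d \/ d' = rev_dart d.
Proof.
move/setP => h; have := h (val d').1; have := h (val d').2.
rewrite !inE !eqxx orbT /=; have := dart_neq d'.
move=> nd' /esym /orP [] /eqP e2 /esym /orP [] /eqP e1.
- by move: nd'; rewrite e1 e2 eqxx.
- by right; apply/eqP; rewrite dart_eqE val_rev_dart /= e1 e2 !eqxx.
- by left; apply/eqP; rewrite dart_eqE e1 e2 !eqxx.
- by move: nd'; rewrite e1 e2 eqxx.
Qed.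

Section ColouringOfG.
Variable col : {set D} -> 'I_3.
Hypothesis col_proper : proper_colouring E col.

Lemma colour_adjacent (a b c : D) : tr a b -> tr a c -> b != c -> col [set a; b] != col [set a; c].
Proof.
move=> tab tac nbc; apply: (col_proper (a := a)); rewrite ?tri_edge ?set21 //.
by apply: contra_neq nbc; apply: set2_inj; rewrite tri_rel_neq.
Qed.

(* The three triangle edges use all three colours, so the outer edge at d1
   has the colour of the triangle edge opposite to d1. *)
Lemma outer_colour_opposite (d1 d2 d3 : D) :
  (val d1).1 = (val d2).1 -> (val d1).1 = (val d3).1 ->
  d1 != d2 -> d1 != d3 -> d2 != d3 -> col [set d1; rev_dart d1] = col [set d2; d3].
Proof.
move=> e12 e13 n12 n13 n23.
have e23 : (val d2).1 = (val d3).1 by rewrite -e12.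
have t12 := same_triangle_tri e12 n12; have t13 := same_triangle_tri e13 n13.
have t23 := same_triangle_tri e23 n23.
have to1 : tr d1 (rev_dart d1) by rewrite tri_relE eqxx.
have c12_13 := colour_adjacent t12 t13 n23.
have c13_23 : col [set d1; d3] != col [set d2; d3].
  by rewrite (setUC [set d1]) (setUC [set d2]); apply: colour_adjacent; rewrite // tri_rel_sym.
have c12_23 : col [set d1; d2] != col [set d2; d3].
  by rewrite (setUC [set d1]); apply: colour_adjacent; rewrite // tri_rel_sym.
have := ord3_cover (col [set d1; rev_dart d1]) c12_13 c13_23 c12_23.
rewrite (negbTE (colour_adjacent to1 t12 (rev_dart_other e12))).
by rewrite (negbTE (colour_adjacent to1 t13 (rev_dart_other e13))) => /eqP.
Qed.

Lemma outer_colours_differ (d1 d2 : D) : (val d1).1 = (val d2).1 -> d1 != d2 ->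
  col [set d1; rev_dart d1] != col [set d2; rev_dart d2].
Proof.
move=> e12 n12; have [d3 /[!inE] /eqP e3 /andP [n31 n32]] := triangle_third (val d1).1 d1 d2.
have e23 : (val d2).1 = (val d3).1 by rewrite e3.
have [n13 n23] : d1 != d3 /\ d2 != d3 by rewrite ![_ == d3]eq_sym.
rewrite (outer_colour_opposite e12 (esym e3) n12 n13 n23).
rewrite (outer_colour_opposite (esym e12) e23 _ n23 n13) 1?eq_sym //.
rewrite (setUC [set d2]) (setUC [set d1]); apply: colour_adjacent.
- exact: same_triangle_tri.
- by apply: same_triangle_tri; rewrite ?e3.
- exact: n12.
Qed.

Definition graph_colour (S : {set T}) : 'I_3 :=
  if [pick d | endpoints d == S] is Some d then col [set d; rev_dart d] else ord0.

Lemma graph_colour_dart (d : D) : graph_colour (endpoints d) = col [set d; rev_dart d].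
Proof.
rewrite /graph_colour; case: pickP => [d' /eqP h|none]; last by have := none d; rewrite eqxx.
by case: (endpoints_eq h) => ->; rewrite ?rev_dartK // setUC.
Qed.

Lemma colourable_of_proper : three_edge_colorable r.
Proof.
exists graph_colour => x y z rxy rxz nyz.
rewrite -[[set x; y]]/(endpoints (Sub (x, y) rxy)) -[[set x; z]]/(endpoints (Sub (x, z) rxz)).
by rewrite !graph_colour_dart; apply: outer_colours_differ; rewrite // dart_eqE /= eqxx.
Qed.

End ColouringOfG.

Section MatchingsOfColouring.
Variable c : {set T} -> 'I_3.
Hypothesis c_proper :
  forall x y z : T, r x y -> r x z -> y != z -> c [set x; y] != c [set x; z].

Definition dart_colour (d : D) : 'I_3 := c (endpoints d).

Lemma dart_colour_rev (d : D) : dart_colour (rev_dart d) = dart_colour d.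
Proof. by rewrite /dart_colour /endpoints val_rev_dart setUC. Qed.

Lemma dart_colour_triangle (a b : D) :
  (val a).1 = (val b).1 -> a != b -> dart_colour a != dart_colour b.
Proof.
move=> e ne; rewrite /dart_colour /endpoints e; apply: c_proper.
- by rewrite -e; apply: (valP a).
- exact: (valP b).
- by move: ne; rewrite dart_eqE e eqxx.
Qed.

Definition partner (j : 'I_3) (a b : D) : bool :=
  ((b == rev_dart a) && (dart_colour a == j)) ||
  [&& (val a).1 == (val b).1, a != b, dart_colour a != j & dart_colour b != j].

Lemma partner_sym j : symmetric (partner j).
Proof.
move=> a b; rewrite /partner; case: (b =P rev_dart a) => [->|nb].
  by rewrite rev_dartK eqxx dart_colour_rev rev_dart_tail eq_sym rev_dart_tail.
have -> : (a == rev_dart b) = false by apply/eqP => h; apply: nb; rewrite h rev_dartK.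
by rewrite /= eq_sym [b == a]eq_sym; congr [&& _, _ & _]; rewrite andbC.
Qed.

Lemma partner_tri j (a b : D) : partner j a b -> tr a b.
Proof.
case/orP => [/andP [/eqP -> _]|/and4P [/eqP e ne _ _]]; last exact: same_triangle_tri.
by rewrite tri_relE eqxx.
Qed.

Lemma partner_uniq j (a b b' : D) : partner j a b -> partner j a b' -> b = b'.
Proof.
rewrite /partner; have [aj|naj] := eqVneq (dart_colour a) j.
  by rewrite /= !andbT !andbF !orbF => /eqP -> /eqP ->.
rewrite /= !andbF /= => /and3P [/eqP e ne bj] /and3P [/eqP e' ne' b'j].
apply/eqP; apply: contraT => nbb.
have eb : (val b).1 = (val b').1 by rewrite -e e'.
have := ord3_cover j (dart_colour_triangle e ne) (dart_colour_triangle eb nbb)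
  (dart_colour_triangle e' ne').
by rewrite eq_sym (negbTE naj) eq_sym (negbTE bj) eq_sym (negbTE b'j).
Qed.

Lemma partner_exists j (a : D) : exists b, partner j a b.
Proof.
case: (dart_colour a =P j) => [aj|/eqP naj].
  by exists (rev_dart a); rewrite /partner eqxx aj eqxx.
have [b /[!inE] /eqP eb /andP [nba _]] := triangle_third (val a).1 a a.
have [b' /[!inE] /eqP eb' /andP [nb'a nb'b]] := triangle_third (val a).1 a b.
have [ab ab'] : (val a).1 = (val b).1 /\ (val a).1 = (val b').1 by rewrite eb eb'.
have bb' : (val b).1 = (val b').1 by rewrite eb eb'.
have [nab nab' nbb'] : [/\ a != b, a != b' & b != b'] by rewrite ![_ == b]eq_sym ![_ == b']eq_sym.
have := ord3_cover j (dart_colour_triangle ab nab) (dart_colour_triangle bb' nbb')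
  (dart_colour_triangle ab' nab').
rewrite eq_sym (negbTE naj) /= => /orP [] /eqP bj.
- exists b'; rewrite /partner [b' == _]eq_sym (negbTE (rev_dart_other ab')) /=.
  by rewrite -ab' eqxx nab' naj bj eq_sym; apply: dart_colour_triangle.
- exists b; rewrite /partner [b == _]eq_sym (negbTE (rev_dart_other ab)) /=.
  by rewrite -ab eqxx nab naj bj; apply: dart_colour_triangle.
Qed.

Lemma partner_perfect j : perfect_matching E (edges (partner j)).
Proof.
apply: (perfect_edges tri_pairs (partner_sym j) _ (partner_exists j) (@partner_uniq j)).
by move=> a b /partner_tri /tri_edge.
Qed.

Lemma partner_disjoint j j' : j != j' -> [disjoint edges (partner j) & edges (partner j')].
Proof.
move=> njj'; apply: edges_disjoint (partner_sym _) _ _ => [a b /partner_tri /tri_rel_neq //|a b].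
rewrite /partner; case: (b =P rev_dart a) => [->|_] /=.
  by rewrite rev_dart_tail /= !orbF => /eqP -> /eqP ajj'; rewrite ajj' eqxx in njj'.
move=> /and4P [/eqP e ne a0 b0] /and4P [_ _ a1 b1].
rewrite eq_sym in a0; rewrite eq_sym in a1.
have := ord3_cover (dart_colour b) njj' a1 a0.
by rewrite (negbTE b0) (negbTE b1) eq_sym (negbTE (dart_colour_triangle e ne)).
Qed.

Lemma disjoint_perfect_of_colouring :
  exists F M, perfect_matching E F /\ perfect_matching (E :\: F) M.
Proof.
exists (edges (partner ord0)), (edges (partner ord_max)); split; first exact: partner_perfect.
case/andP: (partner_perfect ord_max) => mM cM.
by rewrite /perfect_matching cM matching_setD // disjoint_sym partner_disjoint.
Qed.

End MatchingsOfColouring.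

Lemma colourable_iff_Lmax : three_edge_colorable r <-> Lmax E * 2 = #|D|.
Proof.
have Lmax_iff := Lmax_perfect tri_pairs outer_perfect.
split=> [[c c_proper]|/Lmax_iff [F [M [pF pM]]]].
  by apply/Lmax_iff; apply: disjoint_perfect_of_colouring c_proper.
apply: (@colourable_of_proper (colour_of F M)).
exact: (colour_of_proper tri_pairs tri_degree pF pM).
Qed.

End TriangleReplacement.

Theorem mainTheorem8 (T : finType) (r : rel T) :
  simple_graph r -> cubic r -> bridgeless r ->
  (three_edge_colorable r <->
   2 * Lmax (edges (tri_rel r)) = 3 * lmin (edges (tri_rel r))).
Proof.
case=> r_sym r_irr r_cubic _.
rewrite (lmin_tri r_sym r_irr r_cubic) -(card_darts r_cubic) mulnC.
exact: colourable_iff_Lmax.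
Qed.
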